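(* Let $P^1,\dots,P^4\in\mathbb{R}^n$ be in general position, let $Q^0$ be the equidistant point from $P^1,\dots,P^4$ with barycentric coordinate $\boldsymbol\lambda^0$, and suppose $\lambda^0_1<0$, $\lambda^0_2,\lambda^0_3,\lambda^0_4\ge0$. Let $Q^1=\pi(Q^0|L(P^2,P^3,P^4))$ with barycentric coordinate $\boldsymbol\lambda^1$ about $P^1,\dots,P^4$, and suppose $\lambda^1_2<0$, $\lambda^1_3\ge0$, $\lambda^1_4\ge0$. Let $Q^2=\pi(Q^1|L(P^3,P^4))$. Then the center of the smallest enclosing circle of $P^1,\dots,P^4$ is $Q^\ast=Q^2$ and its radius is $d^\ast=d(P^3,Q^2)$.
   Context: $d$ is the Euclidean distance. Points are in general position if $P^2-P^1,\dots,P^m-P^1$ are linearly independent. $L(S^1,\dots,S^r)$ is the affine subspace spanned by the points; $\pi(Q'|L)$ is the orthogonal projection onto the affine subspace $L$. The barycentric coordinate of $Q\in L(P^1,\dots,P^m)$ is the unique $\boldsymbol\lambda$ with $\sum_i\lambda_i=1$, $Q=\sum_i\lambda_iP^i$. The equidistant point is the unique $Q^0\in L(P^1,\dots,P^m)$ with all $d(P^i,Q^0)$ equal. The smallest enclosing circle has center $Q^\ast$ attaining $\min_Q\max_i d(P^i,Q)$ and radius $d^\ast$ equal to this minimum. *)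

From HB Require Import structures.
From mathcomp Require Import all_boot all_order all_algebra.
From mathcomp Require Import reals.
Set Implicit Arguments. Unset Strict Implicit. Unset Printing Implicit Defensive.
Import Order.TTheory GRing.Theory Num.Theory.
Local Open Scope ring_scope.

Section Defs.
Variables (R : realType) (n : nat).
Implicit Types (P Q X A B C : 'rV[R]_n).

Definition dotv (u v : 'rV[R]_n) : R := (u *m v^T) 0 0.
Definition dist P Q : R := Num.sqrt (dotv (P - Q) (P - Q)).

Definition general_position4 (P1 P2 P3 P4 : 'rV[R]_n) : Prop :=
  free [:: P2 - P1; P3 - P1; P4 - P1].

Definition bary4 (P1 P2 P3 P4 Q : 'rV[R]_n) (l1 l2 l3 l4 : R) : Prop :=
  l1 + l2 + l3 + l4 = 1 /\ Q = l1 *: P1 + l2 *: P2 + l3 *: P3 + l4 *: P4.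

Definition orth_proj3 (A B C Q X : 'rV[R]_n) : Prop :=
  (exists a b c : R, a + b + c = 1 /\ X = a *: A + b *: B + c *: C) /\
  dotv (Q - X) (B - A) = 0 /\ dotv (Q - X) (C - A) = 0.

Definition orth_proj2 (A B Q X : 'rV[R]_n) : Prop :=
  (exists a b : R, a + b = 1 /\ X = a *: A + b *: B) /\
  dotv (Q - X) (B - A) = 0.

Definition maxdist4 (P1 P2 P3 P4 Q : 'rV[R]_n) : R :=
  Num.max (Num.max (dist P1 Q) (dist P2 Q)) (Num.max (dist P3 Q) (dist P4 Q)).

Definition sec_center4 (P1 P2 P3 P4 Q : 'rV[R]_n) : Prop :=
  forall Q' : 'rV[R]_n, maxdist4 P1 P2 P3 P4 Q <= maxdist4 P1 P2 P3 P4 Q'.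

End Defs.

(* For a point O = sum_i l_i P_i equidistant (radius r) from the P_i and any
   two of them A, B, the weighted sum sum_i l_i (P_i - A).(P_i - B) equals
   r^2 + (A - O).(B - O) = |(A - O) + (B - O)|^2 / 2 >= 0.  By Pythagoras Q1 is
   equidistant from P2, P3, P4, and by general position its weight on P2 is
   l12 < 0, so (P2 - P3).(P2 - P4) <= 0; the same identity at Q0 then gives
   (P1 - P3).(P1 - P4) <= 0.  As (X - P3).(X - P4) = |X - M|^2 - |P3 - M|^2 for the
   midpoint M of P3 P4, all four points lie in the ball of diameter P3 P4, and by
   the parallelogram law every other centre is farther from P3 or P4.  Finally
   Q2 = M because Q1 is equidistant from P3 and P4. *)
From HB Require Import structures.
From mathcomp Require Import all_boot all_order all_algebra.
From mathcomp Require Import reals ring lra.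
Import Order.TTheory GRing.Theory Num.Theory.
Set Implicit Arguments. Unset Strict Implicit.
Local Open Scope ring_scope.

Section Euclid.
Variables (R : realType) (n : nat).
Implicit Types (u v w : 'rV[R]_n) (A B C O P Q X Y : 'rV[R]_n).

Lemma dotvE u v : dotv u v = \sum_j u 0 j * v 0 j.
Proof. by rewrite /dotv !mxE; apply: eq_bigr => j _; rewrite mxE. Qed.

Lemma dotvC u v : dotv u v = dotv v u.
Proof. by rewrite !dotvE; apply: eq_bigr => j _; rewrite mulrC. Qed.

Lemma dotvDl u v w : dotv (u + v) w = dotv u w + dotv v w.
Proof. by rewrite !dotvE -big_split; apply: eq_bigr => j _; rewrite mxE mulrDl. Qed.

Lemma dotvZl a u w : dotv (a *: u) w = a * dotv u w.
Proof. by rewrite !dotvE mulr_sumr; apply: eq_bigr => j _; rewrite mxE mulrA. Qed.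

Lemma dotvNl u w : dotv (- u) w = - dotv u w.
Proof. by rewrite -scaleN1r dotvZl mulN1r. Qed.

Lemma dotvBl u v w : dotv (u - v) w = dotv u w - dotv v w.
Proof. by rewrite dotvDl dotvNl. Qed.

Lemma dotvDr u v w : dotv w (u + v) = dotv w u + dotv w v.
Proof. by rewrite dotvC dotvDl !(dotvC w). Qed.

Lemma dotvZr a u w : dotv w (a *: u) = a * dotv w u.
Proof. by rewrite dotvC dotvZl dotvC. Qed.

Lemma dotvBr u v w : dotv w (u - v) = dotv w u - dotv w v.
Proof. by rewrite dotvC dotvBl !(dotvC w). Qed.

Lemma dotvNr u w : dotv w (- u) = - dotv w u.
Proof. by rewrite dotvC dotvNl dotvC. Qed.

Lemma dotv0l w : dotv 0 w = 0.
Proof. by rewrite -(scale0r 0) dotvZl mul0r. Qed.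

Lemma dotv0r w : dotv w 0 = 0.
Proof. by rewrite dotvC dotv0l. Qed.

Lemma dotv_suml I (r : seq I) (F : I -> 'rV[R]_n) w :
  dotv (\sum_(i <- r) F i) w = \sum_(i <- r) dotv (F i) w.
Proof. by elim/big_rec2: _ => [|i x y _ <-]; rewrite ?dotv0l ?dotvDl. Qed.

Lemma dotv_ge0 u : 0 <= dotv u u.
Proof. by rewrite dotvE sumr_ge0 // => j _; rewrite -expr2 sqr_ge0. Qed.

Lemma dotv_eq0 u : (dotv u u == 0) = (u == 0).
Proof.
apply/eqP/eqP => [|->]; last by rewrite dotv0l.
rewrite dotvE => /psumr_eq0P u0; apply/rowP => j; rewrite mxE.
have /eqP : u 0 j * u 0 j = 0 by apply: u0 => // i _; rewrite -expr2 sqr_ge0.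
by rewrite mulf_eq0 orbb => /eqP.
Qed.

Definition sqdist P Q := dotv (P - Q) (P - Q).

Lemma sqdist_ge0 P Q : 0 <= sqdist P Q.
Proof. exact: dotv_ge0. Qed.

Lemma sqdist_eq0 P Q : (sqdist P Q == 0) = (P == Q).
Proof. by rewrite /sqdist dotv_eq0 subr_eq0. Qed.

Lemma ler_dist P Q P' Q' : (dist P Q <= dist P' Q') = (sqdist P Q <= sqdist P' Q').
Proof. by rewrite ler_sqrt ?sqdist_ge0. Qed.

Lemma eq_sqdist P Q P' Q' : dist P Q = dist P' Q' -> sqdist P Q = sqdist P' Q'.
Proof. by move/eqP; rewrite eqr_sqrt ?sqdist_ge0 // => /eqP. Qed.

Lemma pythagoras Q X Y : dotv (Q - X) (Y - X) = 0 ->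
  sqdist Y Q = sqdist Y X + sqdist Q X.
Proof.
move=> orth; rewrite /sqdist.
have -> : Y - Q = (Y - X) - (Q - X) by rewrite opprB addrA subrK.
move: (Y - X) (Q - X) orth => u v orth.
rewrite dotvBl !dotvBr (dotvC u v) orth; lra.
Qed.

Lemma bary_dot_identity m (P : 'I_m -> 'rV[R]_n) (l : 'I_m -> R) O A B :
  \sum_i l i = 1 -> O = \sum_i l i *: P i ->
  \sum_i l i * dotv (P i - A) (P i - B) =
  \sum_i l i * sqdist (P i) O + dotv (A - O) (B - O).
Proof.
move=> l1 hO.
have bal : \sum_i l i *: (P i - O) = 0.
  by rewrite (eq_bigr _ (fun i _ => scalerBr _ _ _)) sumrB -scaler_suml l1 scale1r hO subrr.
have expand i : l i * dotv (P i - A) (P i - B) = l i * sqdist (P i) O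
    - dotv (l i *: (P i - O)) (B - O) - dotv (l i *: (P i - O)) (A - O)
    + l i * dotv (A - O) (B - O).
  have sub_shift X : P i - X = (P i - O) - (X - O) by rewrite opprB addrA subrK.
  rewrite (sub_shift A) (sub_shift B) /sqdist !dotvZl; move: (P i - O) (A - O) (B - O) => u a b.
  by rewrite !dotvBl !dotvBr (dotvC a u); ring.
rewrite (eq_bigr _ (fun i _ => expand i)) big_split !sumrB /= -!dotv_suml bal !dotv0l.
by rewrite -mulr_suml l1 mul1r !subr0.
Qed.

Lemma equidistant_bary_dot_ge0 m (P : 'I_m -> 'rV[R]_n) (l : 'I_m -> R) O A B r :
  \sum_i l i = 1 -> O = \sum_i l i *: P i ->
  (forall i, sqdist (P i) O = r) -> sqdist A O = r -> sqdist B O = r ->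
  0 <= \sum_i l i * dotv (P i - A) (P i - B).
Proof.
move=> l1 hO eqPO eqA eqB; rewrite (bary_dot_identity _ _ l1 hO).
rewrite (eq_bigr _ (fun i _ => congr1 (fun x => l i * x) (eqPO i))) -mulr_suml l1 mul1r.
move: eqA eqB (dotv_ge0 ((A - O) + (B - O))); rewrite /sqdist.
move: (A - O) (B - O) => a b; rewrite !dotvDl !dotvDr (dotvC b a); lra.
Qed.

Lemma bary3_equidistant_dot_ge0 A B C O a b c :
  a + b + c = 1 -> O = a *: A + b *: B + c *: C ->
  sqdist A O = sqdist C O -> sqdist B O = sqdist C O ->
  0 <= a * dotv (A - B) (A - C).
Proof.
move=> abc1 hO eqA eqB.
have := @equidistant_bary_dot_ge0 3 (fun i => [:: A; B; C]`_i) (fun i => [:: a; b; c]`_i)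
  O B C (sqdist C O).
rewrite !big_ord_recl !big_ord0 /= !subrr dotv0l dotv0r !mulr0 !addr0 !addrA.
by apply=> //; case=> [[|[|[|]]]].
Qed.

Lemma bary4_equidistant_dot_ge0 P1 P2 P3 P4 O l1 l2 l3 l4 :
  bary4 P1 P2 P3 P4 O l1 l2 l3 l4 ->
  sqdist P1 O = sqdist P4 O -> sqdist P2 O = sqdist P4 O -> sqdist P3 O = sqdist P4 O ->
  0 <= l1 * dotv (P1 - P3) (P1 - P4) + l2 * dotv (P2 - P3) (P2 - P4).
Proof.
move=> [l1s hO] eq1 eq2 eq3.
have := @equidistant_bary_dot_ge0 4 (fun i => [:: P1; P2; P3; P4]`_i)
  (fun i => [:: l1; l2; l3; l4]`_i) O P3 P4 (sqdist P4 O).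
rewrite !big_ord_recl !big_ord0 /= !subrr dotv0l dotv0r !mulr0 !addr0 !addrA.
by apply=> //; case=> [[|[|[|[|]]]]].
Qed.

Lemma free3_eq0 u v w a b c : free [:: u; v; w] ->
  a *: u + b *: v + c *: w = 0 -> [/\ a = 0, b = 0 & c = 0].
Proof.
move=> /(@freeP _ _ _ (in_tuple [:: u; v; w])) free_uvw comb0.
have := free_uvw (fun i : 'I_3 => [:: a; b; c]`_i).
rewrite !big_ord_recl big_ord0 /= addr0 addrA => /(_ comb0) coef0.
by split; [apply: (coef0 0) | apply: (coef0 1) | apply: (coef0 2)].
Qed.

Lemma bary4_inj P1 P2 P3 P4 Q l1 l2 l3 l4 k1 k2 k3 k4 :
  general_position4 P1 P2 P3 P4 ->
  bary4 P1 P2 P3 P4 Q l1 l2 l3 l4 -> bary4 P1 P2 P3 P4 Q k1 k2 k3 k4 ->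
  [/\ l1 = k1, l2 = k2, l3 = k3 & l4 = k4].
Proof.
move=> gp [l1s hl] [k1s hk].
have : (l2 - k2) *: (P2 - P1) + (l3 - k3) *: (P3 - P1) + (l4 - k4) *: (P4 - P1) = 0.
  apply/rowP => j; move/rowP: hl => /(_ j); move/rowP: hk => /(_ j); rewrite !mxE.
  have -> : l1 = 1 - l2 - l3 - l4 by lra.
  have -> : k1 = 1 - k2 - k3 - k4 by lra.
  lra.
by case/(free3_eq0 gp) => *; split; lra.
Qed.

Lemma general_position4_neq34 P1 P2 P3 P4 :
  general_position4 P1 P2 P3 P4 -> P3 != P4.
Proof.
move=> gp; apply/eqP => P34.
have : 0 *: (P2 - P1) + 1 *: (P3 - P1) + (-1) *: (P4 - P1) = 0.
  by rewrite P34 scale0r add0r scale1r scaleN1r subrr.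
by case/(free3_eq0 gp) => _ /eqP; rewrite oner_eq0.
Qed.

Lemma orth_proj3_orth A B C Q X : orth_proj3 A B C Q X ->
  [/\ dotv (Q - X) (A - X) = 0, dotv (Q - X) (B - X) = 0 & dotv (Q - X) (C - X) = 0].
Proof.
move=> [[a [b [c [abc1 hX]]]] [oB oC]].
have in_plane Y b' c' : Y - X = b' *: (B - A) + c' *: (C - A) -> dotv (Q - X) (Y - X) = 0.
  by move=> ->; rewrite dotvDr !dotvZr oB oC !mulr0 addr0.
have eX j : X 0 j = (1 - b - c) * A 0 j + b * B 0 j + c * C 0 j.
  by move/rowP: hX => /(_ j); rewrite !mxE => ->; congr (_ * _ + _ + _); lra.
split; [apply: (in_plane _ (- b) (- c)) | apply: (in_plane _ (1 - b) (- c))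
       | apply: (in_plane _ (- b) (1 - c))]; by apply/rowP => j; rewrite !mxE eX; ring.
Qed.

Lemma orth_proj3_equidistant A B C Q X : orth_proj3 A B C Q X ->
  sqdist A Q = sqdist C Q -> sqdist B Q = sqdist C Q ->
  sqdist A X = sqdist C X /\ sqdist B X = sqdist C X.
Proof.
case/orth_proj3_orth => /pythagoras oA /pythagoras oB /pythagoras oC.
by rewrite oA oB oC; split; lra.
Qed.

Definition midpoint A B := 2^-1 *: (A + B).

Lemma orth_proj2_midpoint A B Q X : A != B -> orth_proj2 A B Q X ->
  sqdist A Q = sqdist B Q -> X = midpoint A B.
Proof.
move=> AB [[a [b [ab1 hX]]] oAB].
have ea : a = 1 - b by lra.
have eA : A - X = b *: (A - B) by rewrite hX ea; apply/rowP => j; rewrite !mxE; ring.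
have eB : B - X = (b - 1) *: (A - B) by rewrite hX ea; apply/rowP => j; rewrite !mxE; ring.
have oBA k : dotv (Q - X) (k *: (A - B)) = 0.
  have -> : A - B = (-1) *: (B - A) by rewrite scaleN1r opprB.
  by rewrite !dotvZr oAB !mulr0.
have oA : dotv (Q - X) (A - X) = 0 by rewrite eA oBA.
have oB : dotv (Q - X) (B - X) = 0 by rewrite eB oBA.
rewrite (pythagoras oA) (pythagoras oB) => /addIr.
rewrite /sqdist eA eB !dotvZl !dotvZr => eqAB.
have dAB_gt0 : 0 < dotv (A - B) (A - B).
  by rewrite lt_def dotv_ge0 dotv_eq0 subr_eq0 AB.
have b2 : b = 2^-1.
  have : (2 * b - 1) * dotv (A - B) (A - B) = 0 by lra.
  by move/eqP; rewrite mulf_eq0 (gt_eqF dAB_gt0) orbF => /eqP; lra.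
by rewrite hX ea b2 /midpoint; apply/rowP => j; rewrite !mxE; field.
Qed.

Lemma sub_midpointr A B : B - midpoint A B = - (A - midpoint A B).
Proof. by apply/rowP => j; rewrite !mxE; field. Qed.

Lemma sqdist_midpoint A B : sqdist B (midpoint A B) = sqdist A (midpoint A B).
Proof. by rewrite /sqdist sub_midpointr dotvNl dotvC dotvNl opprK. Qed.

Lemma dotv_sub_midpoint A B X :
  dotv (X - A) (X - B) = sqdist X (midpoint A B) - sqdist A (midpoint A B).
Proof.
set M := midpoint A B; rewrite /sqdist.
have shift Y : X - Y = (X - M) - (Y - M) by rewrite opprB addrA subrK.
rewrite (shift A) (shift B) sub_midpointr opprK.
by move: (X - M) (A - M) => x a; rewrite dotvBl !dotvDr (dotvC a x); ring.
Qed.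

Lemma parallelogram_midpoint A B X :
  sqdist A X + sqdist B X = 2 * sqdist (midpoint A B) X + 2 * sqdist A (midpoint A B).
Proof.
set M := midpoint A B; rewrite /sqdist.
have shift Y : Y - X = (Y - M) + (M - X) by rewrite addrA subrK.
rewrite (shift A) (shift B) sub_midpointr.
by move: (M - X) (A - M) => x a; rewrite !dotvDl !dotvDr !dotvNl !dotvNr (dotvC a x); lra.
Qed.

Section SmallestEnclosingBall.
Variables P1 P2 P3 P4 : 'rV[R]_n.
Let M := midpoint P3 P4.

Lemma maxdist4_midpoint :
  dotv (P1 - P3) (P1 - P4) <= 0 -> dotv (P2 - P3) (P2 - P4) <= 0 ->
  maxdist4 P1 P2 P3 P4 M = dist P3 M.
Proof.
rewrite !dotv_sub_midpoint !subr_le0 -!ler_dist => le1 le2.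
have eq4 : dist P4 M = dist P3 M by rewrite /dist -/(sqdist _ _) sqdist_midpoint.
apply/le_anti; rewrite !ge_max le1 le2 eq4 lexx /=.
by rewrite !le_max lexx !orbT.
Qed.

Lemma midpoint_sqdist_le Q :
  sqdist P3 M + sqdist M Q <= Num.max (sqdist P3 Q) (sqdist P4 Q).
Proof.
have := parallelogram_midpoint P3 P4 Q; rewrite -/M => par.
by have [?|?] := leP (sqdist P3 Q) (sqdist P4 Q); lra.
Qed.

Lemma dist_midpoint_le_maxdist4 Q : dist P3 M <= maxdist4 P1 P2 P3 P4 Q.
Proof.
have le3 : dist P3 M <= Num.max (dist P3 Q) (dist P4 Q).
  rewrite le_max !ler_dist; have := midpoint_sqdist_le Q.
  by rewrite le_max => /orP[] le; rewrite (le_trans _ le) ?orbT // lerDl sqdist_ge0.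
by rewrite /maxdist4 le_max le3 orbT.
Qed.

Lemma maxdist4_le_midpoint Q :
  maxdist4 P1 P2 P3 P4 Q <= dist P3 M -> Q = M.
Proof.
rewrite /maxdist4 !ge_max !ler_dist => /andP[_ /andP[le3 le4]].
have : sqdist P3 M + sqdist M Q <= sqdist P3 M.
  by apply: le_trans (midpoint_sqdist_le Q) _; rewrite ge_max le3 le4.
rewrite gerDl => le0; apply/esym/eqP.
by rewrite -sqdist_eq0 eq_le le0 sqdist_ge0.
Qed.

End SmallestEnclosingBall.

End Euclid.

Theorem theorem8 (R : realType) (n : nat)
  (P1 P2 P3 P4 Q0 Q1 Q2 : 'rV[R]_n)
  (l01 l02 l03 l04 l11 l12 l13 l14 : R) :
  general_position4 P1 P2 P3 P4 ->
  (* Q0 is the equidistant point, with barycentric coordinate l0 *)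
  bary4 P1 P2 P3 P4 Q0 l01 l02 l03 l04 ->
  dist P1 Q0 = dist P2 Q0 -> dist P1 Q0 = dist P3 Q0 -> dist P1 Q0 = dist P4 Q0 ->
  l01 < 0 -> 0 <= l02 -> 0 <= l03 -> 0 <= l04 ->
  (* Q1 = pi(Q0 | L(P2,P3,P4)), with barycentric coordinate l1 about P1..P4 *)
  orth_proj3 P2 P3 P4 Q0 Q1 ->
  bary4 P1 P2 P3 P4 Q1 l11 l12 l13 l14 ->
  l12 < 0 -> 0 <= l13 -> 0 <= l14 ->
  (* Q2 = pi(Q1 | L(P3,P4)) *)
  orth_proj2 P3 P4 Q1 Q2 ->
  (* Q2 is the (unique) center of the smallest enclosing circle, radius d(P3,Q2) *)
  sec_center4 P1 P2 P3 P4 Q2 /\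
  (forall Q : 'rV[R]_n, sec_center4 P1 P2 P3 P4 Q -> Q = Q2) /\
  maxdist4 P1 P2 P3 P4 Q2 = dist P3 Q2.
Proof.
move=> gp bary0 d12 d13 d14 l01_lt0 l02_ge0 _ _ proj1 bary1 l12_lt0 _ _ proj2.
have [e1 e2 e3] : [/\ sqdist P1 Q0 = sqdist P4 Q0, sqdist P2 Q0 = sqdist P4 Q0
                    & sqdist P3 Q0 = sqdist P4 Q0].
  by split; apply: eq_sqdist; rewrite -?d12 -?d13 -d14.
have [[a [b [c [abc1 hQ1]]]] _] := proj1.
have l12E : l12 = a.
  have bary1' : bary4 P1 P2 P3 P4 Q1 0 a b c by split; rewrite ?scale0r add0r.
  by case: (bary4_inj gp bary1 bary1').
have [f2 f3] := orth_proj3_equidistant proj1 e2 e3.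
have T2_le0 : dotv (P2 - P3) (P2 - P4) <= 0.
  by rewrite -(nmulr_rge0 _ l12_lt0) l12E (bary3_equidistant_dot_ge0 abc1 hQ1 f2 f3).
have T1_le0 : dotv (P1 - P3) (P1 - P4) <= 0.
  rewrite -(nmulr_rge0 _ l01_lt0).
  apply: le_trans (bary4_equidistant_dot_ge0 bary0 e1 e2 e3) _.
  by rewrite gerDl mulr_ge0_le0.
have -> := orth_proj2_midpoint (general_position4_neq34 gp) proj2 f3.
split; last split.
- by move=> Q; rewrite maxdist4_midpoint // dist_midpoint_le_maxdist4.
- by move=> Q /(_ (midpoint P3 P4)); rewrite maxdist4_midpoint // => /maxdist4_le_midpoint.
- exact: maxdist4_midpoint.
Qed.
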